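(* For every $T$-round DRACC instance in which every user has a $k_t$-demand valuation function, the corresponding Dd-MDP is $O(\sqrt{C W\cdot T})$-chasable (with respect to arbitrary target pricing policies).
   Context: DRACC problem: there are $N$ resources and $T$ users arriving in rounds $t=1,\dots,T$. Resource $i\in[N]$ arrives at the start of round $t_a(i)$ and departs at the end of round $t_e(i)$ ($1\le t_a(i)\le t_e(i)\le T$), with capacity $c(i)\in\mathbb{Z}_{>0}$ units on arrival. $A_t\subseteq[N]$ is the set of resources active at time $t$ (those with $t_a(i)\le t\le t_e(i)$). $C\ge\max_i c(i)$ and $W\ge\max_t|A_t|$ are known upper bounds independent of $T$. User $t$ has a valuation $v_t:2^{A_t}\to[0,1)$ with $v_t(\emptyset)=0$ and is quasi-linear. A valuation is $k_t$-demand if there are an integer $1\le k_t\le|A_t|$ and values $w_t^i\in[0,1)$ such that $v_t(A)=\max_{A'\subseteq A,|A'|\le k_t}\sum_{i\in A'}w^i_t$. In round $t$ a mechanism posts $\bm p_t\in(0,1]^{A_t}$; user $t$ receives one unit of each resource in the demand set $\hat A^{\bm p}_t=\arg\max_{A\subseteq A_t}\{v_t(A)-\sum_{i\in A}\bm p(i)\}$ (ties broken lexicographically) and pays $\hat q^{\bm p}_t=\sum_{i\in\hat A^{\bm p}_t}\bm p(i)$; $v_t$ is revealed to the mechanism after posting. The inventory vector $\bm\lambda_t\in\{0,\dots,C\}^{A_t}$ has $\bm\lambda_t(i)=c(i)$ if $t_a(i)=t$, and $\bm\lambda_{t+1}(i)=\bm\lambda_t(i)-\mathbb{1}[i\in\hat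 A^{\bm p_t}_t]$ for $i\in A_t\cap A_{t+1}$. A price vector $\bm p$ is feasible for $\bm\lambda$ if $\bm p(i)=1$ whenever $\bm\lambda(i)=0$; posted prices must be feasible. A pricing policy maps each inventory vector to a feasible price vector. Arrival/departure times, capacities and valuations are chosen by an (adaptive) adversary. Corresponding Dd-MDP: states are inventory vectors; feasible actions at a state are price vectors feasible for it; reward $f_t(s,x)=\hat q^{x}_t$; transition $g_t(s,x)=s'$ with $s'(i)=s(i)-\mathbb{1}[i\in\hat A^x_t]$ for $i\in A_{t+1}\cap A_t$ and $s'(i)=c(i)$ for $i\in A_{t+1}\setminus A_t$. A policy $\gamma$ is simulated from the true initial inventory: $s^\gamma_1=s_1$, $x^\gamma_t=\gamma(s^\gamma_t)$, $s^\gamma_{t+1}=g_t(s^\gamma_t,x^\gamma_t)$. $\sigma$-chasability: there is a (possibly randomized) chasing oracle such that for any target policy $\gamma$, any round $t_{\mathrm{init}}$ and any initial state $s_{\mathrm{init}}$ (possibly different from $s^\gamma_{t_{\mathrm{init}}}$), it outputs in each round $t\ge t_{\mathrm{init}}$ an action $\hat x(t)$ feasible for $\hat s(t)$, where $\hat s(t_{\mathrm{init}})=s_{\mathrm{init}}$, $\hat s(t)=g_{t-1}(\hat s(t-1),\hat x(t-1))$, and afterwards observes $g_t,f_t$; and for every $t_{\mathrm{final}}\ge t_{\mathrm{init}}$, $\sum_{t=t_{\mathrm{init}}}^{t_{\mathrm{final}}}f_t(s^\gamma_t,x^\gamma_t)-\sum_{t=t_{\mathrm{init}}}^{t_{\mathrm{final}}}\mathbb{E}[f_t(\hat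 s(t),\hat x(t))]\le\sigma$. *)

From HB Require Import structures.
From mathcomp Require Import all_boot all_order all_algebra.
From mathcomp Require Import reals.
Set Implicit Arguments. Unset Strict Implicit. Unset Printing Implicit Defensive.
Import Order.TTheory GRing.Theory Num.Theory.
Local Open Scope ring_scope.

Section DRACC.
Variable R : realType.
Variable N : nat.

(* A DRACC instance over resources 'I_N: arrival/departure times, capacities,
   and the valuation v_t of the user of round t (meaningful on subsets of A_t). *)
Record instance := Instance {
  ta : 'I_N -> nat;
  te : 'I_N -> nat;
  cap : 'I_N -> nat;
  val : nat -> {set 'I_N} -> R }.

(* Inventory vectors and price vectors are total functions on 'I_N; only the
   coordinates in the active set A_t are meaningful.  States produced by the
   dynamics are 0 outside A_t. *)
Definition state := 'I_N -> nat.
Definition price := 'I_N -> R.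

Definition act (I : instance) (t : nat) : {set 'I_N} :=
  [set i | (ta I i <= t)%N && (t <= te I i)%N].

Definition feasible (A : {set 'I_N}) (s : state) (p : price) : Prop :=
  forall i, i \in A -> 0 < p i <= 1 /\ (s i = 0%N -> p i = 1).

Definition util (I : instance) (t : nat) (p : price) (A : {set 'I_N}) : R :=
  val I t A - \sum_(i in A) p i.

Definition maximizers (I : instance) (t : nat) (p : price) : {set {set 'I_N}} :=
  [set A : {set 'I_N} | (A \subset act I t) &&
     [forall B : {set 'I_N}, (B \subset act I t) ==> (util I t p B <= util I t p A)]].

(* Lexicographic order on characteristic vectors (resource 0 most significant,
   "not in" < "in"): A <=lex B iff A = B or at the first index where they
   differ, the resource is in B but not in A. *)
Definition lexle (A B : {set 'I_N}) : bool :=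
  (A == B) || [exists i : 'I_N, [&& i \notin A, i \in B &
     [forall j : 'I_N, (j < i)%N ==> ((j \in A) == (j \in B))]]].

Definition dem (I : instance) (t : nat) (p : price) : {set 'I_N} :=
  odflt set0 [pick A in maximizers I t p |
                [forall B in maximizers I t p, lexle A B]].

(* payment = reward f_t(s, p) of the Dd-MDP *)
Definition pay (I : instance) (t : nat) (p : price) : R :=
  \sum_(i in dem I t p) p i.

Definition next (I : instance) (t : nat) (s : state) (p : price) : state :=
  fun i => if i \in act I t.+1 then
             (if i \in act I t then (s i - (i \in dem I t p))%N else cap I i)
           else 0%N.

Definition init (I : instance) : state :=
  fun i => if i \in act I 1 then cap I i else 0%N.

(* trajectory of a (time-indexed) rule started at round t0 in state s0;
   traj ... n is the state at round t0 + n *)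
Fixpoint traj (I : instance) (pol : nat -> state -> price) (t0 : nat)
  (s0 : state) (n : nat) : state :=
  match n with
  | 0 => s0
  | n'.+1 => let s := traj I pol t0 s0 n' in
             next I (t0 + n') s (pol (t0 + n') s)
  end.

Definition state_at (I : instance) (pol : nat -> state -> price) (t0 : nat)
  (s0 : state) (t : nat) : state := traj I pol t0 s0 (t - t0).

Definition k_demand (A : {set 'I_N}) (v : {set 'I_N} -> R) : Prop :=
  exists (k : nat) (w : 'I_N -> R),
    [/\ (1 <= k <= #|A|)%N,
        (forall i, i \in A -> 0 <= w i < 1) &
        forall B : {set 'I_N}, B \subset A ->
          v B = \big[Num.max/0]_(B' : {set 'I_N} | (B' \subset B) && (#|B'| <= k)%N)
                  \sum_(i in B') w i].

Definition valid_instance (C W T : nat) (I : instance) : Prop :=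
  [/\ forall i, [/\ (1 <= ta I i)%N, (ta I i <= te I i)%N & (te I i <= T)%N],
      forall i, (0 < cap I i <= C)%N,
      forall t, (#|act I t| <= W)%N,
      forall t, (1 <= t <= T)%N ->
        val I t set0 = 0 /\ (forall A : {set 'I_N}, A \subset act I t -> 0 <= val I t A < 1)
    & forall t, (1 <= t <= T)%N -> k_demand (act I t) (val I t)].

(* pricing policies: map an inventory vector (with its domain A_t) to prices *)
Definition policy := {set 'I_N} -> state -> price.

Definition feasible_policy (g : policy) : Prop :=
  forall A s, feasible A s (g A s).

Definition policy_rule (I : instance) (g : policy) : nat -> state -> price :=
  fun t s => g (act I t) s.

Definition target_reward (I : instance) (g : policy) (t : nat) : R :=
  pay I t (g (act I t) (state_at I (policy_rule I g) 1 (init I) t)).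

(* A randomized chasing oracle with random seed in Omega: given the target
   policy, t_init, s_init, the seed, the round t and the instance, it outputs
   the price of round t. *)
Definition oracle (Omega : Type) :=
  policy -> nat -> state -> Omega -> nat -> instance -> price.

(* Information available before posting in round t: the active sets and the
   capacities of arrived resources up to round t, and the transition and
   reward functions g_s, f_s of all previous rounds s < t. *)
Definition obs_eq (I I' : instance) (t : nat) : Prop :=
  [/\ forall s, (s <= t)%N -> act I s = act I' s,
      forall i, (ta I i <= t)%N -> cap I i = cap I' i &
      forall s, (s < t)%N ->
        (forall st p, next I s st p = next I' s st p) /\
        (forall p, pay I s p = pay I' s p)].

Definition online (Omega : Type) (orc : oracle Omega) : Prop :=
  forall g t0 s0 om t I I', obs_eq I I' t ->
    orc g t0 s0 om t I = orc g t0 s0 om t I'.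

Definition oracle_rule (Omega : Type) (orc : oracle Omega) (g : policy)
  (t0 : nat) (s0 : state) (om : Omega) (I : instance) : nat -> state -> price :=
  fun t _ => orc g t0 s0 om t I.

Definition oracle_state (Omega : Type) (orc : oracle Omega) (g : policy)
  (t0 : nat) (s0 : state) (om : Omega) (I : instance) (t : nat) : state :=
  state_at I (oracle_rule orc g t0 s0 om I) t0 s0 t.

Definition round_eq (I I' : instance) (t : nat) : Prop :=
  [/\ act I t = act I' t,
      forall i, ta I i = t -> cap I i = cap I' i &
      forall A : {set 'I_N}, A \subset act I t -> val I t A = val I' t A].

(* An adaptive adversary, given as the instance realized under each seed:
   the data of round t may depend on the seed only through the prices the
   oracle actually posted in rounds t0 <= s < t. *)
Definition adaptive (Omega : Type) (orc : oracle Omega) (g : policy) (t0 : nat)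
  (s0 : state) (adv : Omega -> instance) : Prop :=
  forall om om' t,
    (forall s, (t0 <= s < t)%N -> forall i, i \in act (adv om) s ->
       orc g t0 s0 om s (adv om) i = orc g t0 s0 om' s (adv om') i) ->
    round_eq (adv om) (adv om') t.

End DRACC.

(** The chaser posts the target policy's prices, except that it posts 1 on the
    resources it has itself sold out, and in every round it independently
    pauses with probability 1/(M+1), posting 1 everywhere.  Outside a pause a
    round costs nothing unless the target's demand set hits a resource sold
    out for the chaser.  The gap sum_i (target inventory - chaser inventory)^+
    is at most CW initially and never grows: in a pause it drops by the number
    of hits, and otherwise it cannot grow because k-demand valuations are gross
    substitutes (blocking a set Z adds at most |D :&: Z| new items to the
    demand set D).  So at most CW paused rounds are hit.  Whether a round is hit
    is decided by the coins of earlier rounds, hence hits are M+1 times as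
    frequent in expectation as paused hits, while pauses number T/(M+1) in
    expectation; M ~ sqrt(T/CW) balances the two into 3 sqrt(CWT). *)

From Pilot Require Import Defs.
From HB Require Import structures.
From mathcomp Require Import all_boot all_order all_algebra.
From mathcomp Require Import reals.
From mathcomp Require Import perm.
From mathcomp Require Import lra zify.
From Stdlib Require Import FunctionalExtensionality PeanoNat.
Set Implicit Arguments. Unset Strict Implicit. Unset Printing Implicit Defensive.
Import Order.TTheory GRing.Theory Num.Theory.
Local Open Scope ring_scope.

Section LexOrder.
Variable N : nat.
Implicit Types A B C : {set 'I_N}.

Lemma lexle_refl A : lexle A A.
Proof. by rewrite /lexle eqxx. Qed.

Lemma lexle_anti A B : lexle A B -> lexle B A -> A = B.
Proof.
rewrite /lexle => /orP[/eqP//|/existsP[i /and3P[iA iB /forallP below_i]]].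
move=> /orP[/eqP//|/existsP[j /and3P[jB jA /forallP below_j]]].
case: (ltngtP i j) => [ij|ji|/val_inj ij].
- by move: (below_j i); rewrite ij /= (negbTE iA) iB.
- by move: (below_i j); rewrite ji /= (negbTE jB) jA.
- by subst j; rewrite iB in jB.
Qed.

Lemma lexle_trans A B C : lexle A B -> lexle B C -> lexle A C.
Proof.
rewrite /lexle => /orP[/eqP->//|/existsP[i /and3P[iA iB /forallP below_i]]].
move=> /orP[/eqP<-|/existsP[j /and3P[jB jC /forallP below_j]]].
  by apply/orP; right; apply/existsP; exists i; rewrite iA iB; apply/forallP.
apply/orP; right; apply/existsP.
case: (ltngtP i j) => [ij|ji|/val_inj ij].
- exists i; rewrite iA /=; move: (below_j i); rewrite ij /= => /eqP <-; rewrite iB /=.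
  apply/forallP => k; apply/implyP => ki.
  by move: (below_i k) (below_j k); rewrite ki (ltn_trans ki ij) /= => /eqP-> /eqP->.
- exists j; rewrite jC /=; move: (below_i j); rewrite ji /= => /eqP ->; rewrite jB /=.
  apply/forallP => k; apply/implyP => kj.
  by move: (below_i k) (below_j k); rewrite kj (ltn_trans kj ji) /= => /eqP-> /eqP->.
- by subst j; rewrite iB in jB.
Qed.

Lemma lexle_total A B : lexle A B || lexle B A.
Proof.
case: (eqVneq A B) => [->|neqAB]; first by rewrite lexle_refl.
have [i Pi] : exists i, (i \in A) != (i \in B).
  apply/existsP; apply: contraNT neqAB => /existsPn same.
  by apply/eqP/setP => x; move: (same x); rewrite negbK => /eqP.
case: (@arg_minnP _ i (fun k => (k \in A) != (k \in B)) (fun k : 'I_N => k : nat) Pi).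
move=> j Pj minj.
have agree (k : 'I_N) : (k < j)%N -> (k \in A) = (k \in B).
  by move=> kj; apply/eqP; apply: contraTT kj => /minj; rewrite -leqNgt.
case jA: (j \in A); move: Pj; rewrite jA; case jB: (j \in B) => // _.
- apply/orP; right; apply/orP; right; apply/existsP; exists j.
  rewrite jB jA /=; apply/forallP => k; apply/implyP => kj.
  by rewrite agree.
- apply/orP; left; apply/orP; right; apply/existsP; exists j.
  rewrite jB jA /=; apply/forallP => k; apply/implyP => kj.
  by rewrite agree.
Qed.

Lemma lexle_setD1 A a : a \in A -> lexle (A :\ a) A.
Proof.
move=> aA; apply/orP; right; apply/existsP; exists a.
rewrite aA !inE eqxx /=; apply/forallP => k; apply/implyP => ka.
by rewrite !inE; case: (eqVneq k a) => [kae|] //; rewrite kae ltnn in ka.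
Qed.

Lemma lexle_swap A a b : a \in A -> b \notin A -> (a < b)%N ->
  lexle (b |: (A :\ a)) A.
Proof.
move=> aA bA ab; apply/orP; right; apply/existsP; exists a.
have /negbTE ba : a != b by apply: contraTneq ab => ->; rewrite ltnn.
rewrite aA !inE eqxx ba /=; apply/forallP => k; apply/implyP => ka; rewrite !inE.
case: (eqVneq k a) => [kae|_]; first by rewrite kae ltnn in ka.
case: (eqVneq k b) => [kbe|_] //=.
by move: (ltn_trans ka ab); rewrite kbe ltnn.
Qed.

Lemma lexle_min (S : {set {set 'I_N}}) : S != set0 ->
  exists2 A, A \in S & forall B, B \in S -> lexle A B.
Proof.
have seq_min (s : seq {set 'I_N}) : s != [::] ->
    exists2 A, A \in s & forall B, B \in s -> lexle A B.
  elim: s => // X s IH _; case: (eqVneq s [::]) => [->|/IH[A As minA]].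
    by exists X; rewrite ?inE // => B; rewrite inE => /eqP->; apply: lexle_refl.
  case/orP: (lexle_total X A) => [XA|AX].
  - exists X; first by rewrite inE eqxx.
    move=> B; rewrite inE => /orP[/eqP->|Bs]; first exact: lexle_refl.
    exact: lexle_trans XA (minA B Bs).
  - by exists A; rewrite ?inE ?As ?orbT // => B; rewrite inE => /orP[/eqP->|/minA].
move=> /set0Pn[A0 A0S]; have [|A] := seq_min (enum S).
  by apply: contraTneq A0S => eS; rewrite -mem_enum eS.
by rewrite mem_enum => AS minA; exists A => // B BS; apply: minA; rewrite mem_enum.
Qed.

End LexOrder.

Section Demand.
Variables (R : realType) (N : nat) (I : instance R N) (t : nat).
Implicit Types (p : price R N) (A B : {set 'I_N}).

Lemma maximizer_sub p A : A \in maximizers I t p -> A \subset act I t.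
Proof. by rewrite inE => /andP[]. Qed.

Lemma maximizer_ge p A B : A \in maximizers I t p -> B \subset act I t ->
  util I t p B <= util I t p A.
Proof. by rewrite inE => /andP[_ /forallP maxA] BA; move: (maxA B); rewrite BA. Qed.

Lemma maximizerI p A : A \subset act I t ->
  (forall B, B \subset act I t -> util I t p B <= util I t p A) ->
  A \in maximizers I t p.
Proof. by move=> AA maxA; rewrite inE AA; apply/forallP => B; apply/implyP/maxA. Qed.

Lemma maximizers_neq0 p : maximizers I t p != set0.
Proof.
have sub0 : (set0 : {set 'I_N}) \subset act I t by rewrite sub0set.
case: (@arg_maxP _ _ _ set0 (fun A : {set 'I_N} => A \subset act I t) (util I t p) sub0).
by move=> A AA maxA; apply/set0Pn; exists A; apply: maximizerI.
Qed.

Lemma dem_spec p : dem I t p \in maximizers I t p /\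
  forall B, B \in maximizers I t p -> lexle (dem I t p) B.
Proof.
rewrite /dem; case: pickP => [A /andP[AM /forall_inP //]|none] /=.
have [A AM minA] := lexle_min (maximizers_neq0 p).
by move: (none A); rewrite AM /=; move/negbT/negP; case; apply/forall_inP.
Qed.

Lemma dem_maximizer p : dem I t p \in maximizers I t p.
Proof. by case: (dem_spec p). Qed.

Lemma dem_lexle p B : B \in maximizers I t p -> lexle (dem I t p) B.
Proof. by case: (dem_spec p) => _; apply. Qed.

Lemma dem_sub p : dem I t p \subset act I t.
Proof. exact: maximizer_sub (dem_maximizer p). Qed.

Lemma dem_lexmin p D : D \in maximizers I t p ->
  (forall B, B \in maximizers I t p -> lexle D B) -> dem I t p = D.
Proof.
by move=> DM minD; apply: lexle_anti (dem_lexle DM) (minD _ (dem_maximizer p)).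
Qed.

Lemma dem_swap_notin_maximizers p a b : a \in dem I t p -> b \notin dem I t p ->
  (a < b)%N -> b |: (dem I t p :\ a) \notin maximizers I t p.
Proof.
move=> aD bD ab; apply/negP => /dem_lexle swapM.
have := lexle_anti swapM (lexle_swap aD bD ab).
by move/setP/(_ b); rewrite !inE eqxx (negbTE bD).
Qed.

Lemma pay_ge0 p : (forall i, i \in act I t -> 0 <= p i) -> 0 <= pay I t p.
Proof. by move=> p_ge0; apply: sumr_ge0 => i /(subsetP (dem_sub p)) /p_ge0. Qed.

Lemma dem_raise p p' : (forall i, i \in act I t -> p i <= p' i) ->
  (forall i, i \in dem I t p -> p' i = p i) -> dem I t p' = dem I t p.
Proof.
move=> le_pp' eq_dem.
have util_le B : B \subset act I t -> util I t p' B <= util I t p B.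
  move=> BA; apply: lerB => //; apply: ler_sum => i iB.
  exact/le_pp'/(subsetP BA).
have util_dem : util I t p' (dem I t p) = util I t p (dem I t p).
  by congr (_ - _); apply: eq_bigr => i /eq_dem.
apply: dem_lexmin.
  apply: maximizerI; first exact: dem_sub.
  move=> B BA; rewrite util_dem; apply: le_trans (util_le B BA) _.
  exact: maximizer_ge (dem_maximizer p) BA.
move=> B BM; apply: dem_lexle; apply: maximizerI; first exact: maximizer_sub BM.
move=> C CA; apply: le_trans (maximizer_ge (dem_maximizer p) CA) _.
rewrite -util_dem; apply: le_trans (maximizer_ge BM (dem_sub p)) _.
exact: util_le (maximizer_sub BM).
Qed.

Hypothesis val_set0 : Defs.val I t set0 = 0.
Hypothesis val_range : forall A, A \subset act I t -> 0 <= Defs.val I t A < 1.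

Lemma pay_lt1 p : pay I t p < 1.
Proof.
have util_dem_ge0 : 0 <= util I t p (dem I t p).
  have <- : util I t p set0 = 0 by rewrite /util val_set0 big_set0 subr0.
  exact: maximizer_ge (dem_maximizer p) (sub0set _).
apply: le_lt_trans (_ : Defs.val I t (dem I t p) < 1).
  by rewrite -subr_ge0.
by case/andP: (val_range (dem_sub p)).
Qed.

Lemma dem_price_lt1 p i : (forall i, i \in act I t -> 0 <= p i) ->
  i \in dem I t p -> p i < 1.
Proof.
move=> p_ge0 iD; apply: le_lt_trans (pay_lt1 p).
rewrite /pay (big_setD1 i iD) /= lerDl; apply: sumr_ge0 => j.
by rewrite !inE => /andP[_ /(subsetP (dem_sub p)) /p_ge0].
Qed.

Lemma dem_feasible_gt0 s p i : feasible (act I t) s p -> i \in dem I t p -> (0 < s i)%N.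
Proof.
move=> p_feas iD; have [_ p_sold_out] := p_feas i (subsetP (dem_sub p) i iD).
have p_ge0 j : j \in act I t -> 0 <= p j by move=> /p_feas[/andP[/ltW]].
rewrite lt0n; apply/eqP => /p_sold_out p_i1.
by have := dem_price_lt1 p_ge0 iD; rewrite p_i1 ltxx.
Qed.

End Demand.

Section KDemand.
Variables (R : realType) (N : nat) (I : instance R N) (t k : nat) (w : 'I_N -> R).
Implicit Types (p : price R N) (A B : {set 'I_N}).
Hypothesis w_range : forall i, i \in act I t -> 0 <= w i < 1.
Hypothesis val_kdemand : forall B, B \subset act I t ->
  Defs.val I t B = \big[Num.max/0]_(B' : {set 'I_N} | (B' \subset B) && (#|B'| <= k)%N)
                     \sum_(i in B') w i.

Lemma val_kdemand_small B : B \subset act I t -> (#|B| <= k)%N ->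
  Defs.val I t B = \sum_(i in B) w i.
Proof.
move=> BA Bk; rewrite val_kdemand //; apply/eqP; rewrite eq_le; apply/andP; split.
- have w_ge0 i : i \in B -> 0 <= w i by move=> /(subsetP BA) /w_range /andP[].
  apply: (big_ind (fun x => x <= \sum_(i in B) w i)).
  + exact: sumr_ge0.
  + by move=> x y hx hy; rewrite ge_max hx hy.
  + move=> B' /andP[B'B _]; rewrite (big_setID B' (A := B)) /= (setIidPr B'B) lerDl.
    by apply: sumr_ge0 => i; rewrite inE => /andP[_ /w_ge0].
- by rewrite (bigD1 B) /= ?subxx ?Bk // le_max lexx.
Qed.

Lemma val_kdemand_attained B : B \subset act I t -> exists B',
  [/\ B' \subset B, (#|B'| <= k)%N & Defs.val I t B = \sum_(i in B') w i].
Proof.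
move=> BA; rewrite val_kdemand //.
apply: (big_ind (fun x => exists B',
  [/\ B' \subset B, (#|B'| <= k)%N & x = \sum_(i in B') w i])).
- by exists set0; rewrite sub0set cards0 big_set0.
- by move=> x y hx hy; have [|] := leP x y.
- by move=> B' /andP[B'B B'k]; exists B'.
Qed.

Definition surplus p A : R := \sum_(i in A) (w i - p i).

Lemma util_small p A : A \subset act I t -> (#|A| <= k)%N ->
  util I t p A = surplus p A.
Proof. by move=> AA Ak; rewrite /util val_kdemand_small // /surplus sumrB. Qed.

Definition price_pos p := forall i, i \in act I t -> 0 < p i.

Lemma feasible_price_pos s p : feasible (act I t) s p -> price_pos p.
Proof. by move=> p_feas i /p_feas[/andP[]]. Qed.

Lemma maximizer_card_le p A : price_pos p -> A \in maximizers I t p ->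
  (#|A| <= k)%N.
Proof.
move=> p_gt0 AM; have AA := maximizer_sub AM.
have [B' [B'A B'k val_A]] := val_kdemand_attained AA.
rewrite leqNgt; apply/negP => kA.
have /subsetPn[x xA xB'] : ~~ (A \subset B').
  by apply: contraL kA => /subset_leq_card AB'; rewrite -leqNgt (leq_trans AB').
have := maximizer_ge AM (subset_trans B'A AA).
rewrite /util val_A val_kdemand_small ?(subset_trans B'A AA) //.
rewrite (big_setID B' (A := A)) /= (setIidPr B'A).
rewrite (big_setD1 x (A := A :\: B')) /=; last by rewrite inE xB' xA.
apply/negP; rewrite -ltNge.
have px_gt0 : 0 < p x by apply/p_gt0/(subsetP AA).
have : 0 <= \sum_(i in (A :\: B') :\ x) p i.
  by apply: sumr_ge0 => i; rewrite !inE => /and3P[_ _ /(subsetP AA) /p_gt0 /ltW].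
lra.
Qed.

Lemma surplus_dem_max p B : price_pos p -> B \subset act I t -> (#|B| <= k)%N ->
  surplus p B <= surplus p (dem I t p).
Proof.
move=> p_gt0 BA Bk; rewrite -util_small // -util_small ?dem_sub //.
  exact: maximizer_ge (dem_maximizer I t p) BA.
exact: maximizer_card_le (dem_maximizer I t p).
Qed.

Lemma dem_surplus_gt0 p x : price_pos p -> x \in dem I t p -> 0 < w x - p x.
Proof.
move=> p_gt0 xD; set D := dem I t p.
have DA : D \subset act I t := dem_sub I t p.
have Dk : (#|D| <= k)%N := maximizer_card_le p_gt0 (dem_maximizer I t p).
have D'A : D :\ x \subset act I t by apply: subset_trans DA; apply: subD1set.
have D'k : (#|D :\ x| <= k)%N by apply: leq_trans (subset_leq_card (subD1set D x)) Dk.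
rewrite ltNge; apply/negP => x_le0.
have D'M : D :\ x \in maximizers I t p.
  apply: maximizerI => // B BA; apply: le_trans (maximizer_ge (dem_maximizer I t p) BA) _.
  by rewrite !util_small // /surplus (big_setD1 x xD) /= gerDr.
have := lexle_anti (dem_lexle D'M) (lexle_setD1 xD).
by move/setP/(_ x); rewrite !inE eqxx xD.
Qed.

Lemma surplus_eq_maximizer p B : price_pos p -> B \subset act I t ->
  (#|B| <= k)%N -> surplus p B = surplus p (dem I t p) -> B \in maximizers I t p.
Proof.
move=> p_gt0 BA Bk eqB; apply: maximizerI => // C CA.
have Dk := maximizer_card_le p_gt0 (dem_maximizer I t p).
rewrite [util _ _ _ B]util_small // eqB -util_small ?dem_sub //.
exact: maximizer_ge (dem_maximizer I t p) CA.
Qed.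

Definition block (Z : {set 'I_N}) p : price R N :=
  fun i => if i \in Z then 1 else p i.

Section Block.
Variables (p : price R N) (Z : {set 'I_N}).
Hypothesis p_gt0 : price_pos p.
Let D := dem I t p.
Let D' := dem I t (block Z p).

Let block_gt0 : price_pos (block Z p).
Proof. by move=> i iA; rewrite /block; case: (i \in Z) => //; apply: p_gt0. Qed.

Let blockE x : x \notin Z -> block Z p x = p x.
Proof. by rewrite /block => /negbTE ->. Qed.

Let DA : D \subset act I t := dem_sub I t p.
Let D'A : D' \subset act I t := dem_sub I t (block Z p).
Let Dk : (#|D| <= k)%N := maximizer_card_le p_gt0 (dem_maximizer I t p).
Let D'k : (#|D'| <= k)%N := maximizer_card_le block_gt0 (dem_maximizer I t _).

Lemma dem_block_notin x : x \in D' -> x \notin Z.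
Proof.
move=> xD'; apply/negP => xZ; move: (dem_surplus_gt0 block_gt0 xD').
rewrite /block xZ subr_gt0; case/andP: (w_range (subsetP D'A x xD')) => _.
by move=> /lt_trans h /h; rewrite ltxx.
Qed.

(* Exchanging [x] and [y] gives maximizers on both sides, and one of the two
   exchanges is lexicographically below the corresponding demand set. *)
Lemma dem_block_exchange x y : x \in D' -> x \notin D -> y \in D -> y \notin D' ->
  y \notin Z -> False.
Proof.
move=> xD' xD yD yD' yZ; have xZ := dem_block_notin xD'.
have xA : x \in act I t := subsetP D'A x xD'.
have yA : y \in act I t := subsetP DA y yD.
have yB' : y \notin D' :\ x by rewrite !inE negb_and yD' orbT.
have xB : x \notin D :\ y by rewrite !inE negb_and xD orbT.
have B'A : y |: (D' :\ x) \subset act I t.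
  by rewrite subUset sub1set yA (subset_trans (subD1set _ _) D'A).
have BA : x |: (D :\ y) \subset act I t.
  by rewrite subUset sub1set xA (subset_trans (subD1set _ _) DA).
have B'k : (#|y |: (D' :\ x)| <= k)%N.
  by have := D'k; rewrite (cardsD1 x D') xD' cardsU1 yB'.
have Bk : (#|x |: (D :\ y)| <= k)%N.
  by have := Dk; rewrite (cardsD1 y D) yD cardsU1 xB.
have surplusB' : surplus (block Z p) (y |: (D' :\ x)) - surplus (block Z p) D'
    = (w y - p y) - (w x - p x).
  rewrite /surplus (big_setU1 _ yB') (big_setD1 _ xD') /= !blockE //; lra.
have surplusB : surplus p (x |: (D :\ y)) - surplus p D = (w x - p x) - (w y - p y).
  rewrite /surplus (big_setU1 _ xB) (big_setD1 _ yD) /=; lra.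
have := surplus_dem_max block_gt0 B'A B'k; rewrite -subr_le0 surplusB' => le1.
have := surplus_dem_max p_gt0 BA Bk; rewrite -subr_le0 surplusB => le2.
case: (ltngtP x y) => [xy|yx|/val_inj xy]; last by rewrite xy yD in xD.
- case/negP: (dem_swap_notin_maximizers xD' yD' xy).
  by apply: surplus_eq_maximizer => //; apply/eqP; rewrite -subr_eq0 surplusB'; lra.
- case/negP: (dem_swap_notin_maximizers yD xD yx).
  by apply: surplus_eq_maximizer => //; apply/eqP; rewrite -subr_eq0 surplusB; lra.
Qed.

Lemma dem_block_keep y : y \in D -> y \notin Z -> y \in D'.
Proof.
move=> yD yZ; apply/negPn/negP => yD'.
have yA : y \in act I t := subsetP DA y yD.
have y_gt0 : 0 < w y - block Z p y by rewrite blockE //; apply: dem_surplus_gt0.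
have [D'_lt_k|k_le_D'] := ltnP #|D'| k.
  have BA : y |: D' \subset act I t by rewrite subUset sub1set yA D'A.
  have Bk : (#|y |: D'| <= k)%N by rewrite cardsU1 yD'.
  have := surplus_dem_max block_gt0 BA Bk.
  by rewrite /surplus (big_setU1 _ yD') /= gerDr leNgt y_gt0.
have /subsetPn[x xD' xD] : ~~ (D' \subset D).
  apply/negP => D'D; have : D' \subset D :\ y.
    apply/subsetP => z zD'; rewrite !inE (subsetP D'D z zD') andbT.
    by apply: contraTneq zD' => ->.
  move/subset_leq_card; have := Dk; rewrite (cardsD1 y D) yD; lia.
exact: dem_block_exchange xD' xD yD yD' yZ.
Qed.

Lemma card_dem_block_new_le : (#|D' :\: D| <= #|D :\: D'|)%N.
Proof.
rewrite leqNgt; apply/negP => more_new.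
have D_lt_D' : (#|D| < #|D'|)%N.
  by rewrite -(cardsID D' D) -(cardsID D D') setIC ltn_add2l.
have /set0Pn[x] : D' :\: D != set0 by rewrite -card_gt0 (leq_ltn_trans _ more_new).
rewrite inE => /andP[xD xD'].
have xA : x \in act I t := subsetP D'A x xD'.
have BA : x |: D \subset act I t by rewrite subUset sub1set xA DA.
have Bk : (#|x |: D| <= k)%N by rewrite cardsU1 xD add1n (leq_trans D_lt_D' D'k).
have := surplus_dem_max p_gt0 BA Bk.
by rewrite /surplus (big_setU1 _ xD) /= gerDr leNgt -blockE ?dem_block_notin ?dem_surplus_gt0.
Qed.

Lemma dem_block_gross_substitutes : (#|D' :\: D| <= #|D :&: Z|)%N.
Proof.
apply: leq_trans card_dem_block_new_le (subset_leq_card _); apply/subsetP => y.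
rewrite !inE => /andP[yD' yD]; rewrite yD /=.
by apply: contraNT yD' => yZ; apply: dem_block_keep.
Qed.

End Block.
End KDemand.

Section Dynamics.
Variables (R : realType) (N : nat).
Implicit Types (I : instance R N) (g : policy R N).

Definition target_state I g : nat -> state N :=
  state_at I (policy_rule I g) 1 (init I).

Definition target_price I g t : price R N := g (act I t) (target_state I g t).

Lemma target_state_succ I g t : (0 < t)%N ->
  target_state I g t.+1 = Defs.next I t (target_state I g t) (target_price I g t).
Proof.
by case: t => // t _; rewrite /target_price /target_state /state_at /= subn1.
Qed.

Definition dynamics_agree I I' t : Prop :=
  [/\ forall s, (s <= t)%N -> act I s = act I' s,
      forall s, (s < t)%N -> Defs.next I s = Defs.next I' s &
      init I = init I'].

Lemma dynamics_agree_le I I' t t' : dynamics_agree I I' t -> (t' <= t)%N ->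
  dynamics_agree I I' t'.
Proof.
case=> eq_act eq_next eq_init t't; split => // s st.
- exact/eq_act/(leq_trans st t't).
- exact/eq_next/(leq_trans st t't).
Qed.

Lemma target_state_agree I I' g t : dynamics_agree I I' t ->
  target_state I g t = target_state I' g t.
Proof.
elim: t => [|t IH] agr.
  by case: agr => _ _; rewrite /target_state /state_at => ->.
case: (posnP t) => [->|t_gt0].
  by case: agr => _ _; rewrite /target_state /state_at => ->.
have [eq_act eq_next _] := agr.
rewrite !target_state_succ // /target_price (IH (dynamics_agree_le agr (leqnSn t))).
by rewrite eq_next // eq_act.
Qed.

Lemma obs_eq_dynamics_agree I I' t : (0 < t)%N -> obs_eq I I' t ->
  dynamics_agree I I' t.
Proof.
move=> t_gt0 [eq_act eq_cap eq_round]; split => //.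
- move=> s st; apply: functional_extensionality => st'.
  by apply: functional_extensionality => p; case: (eq_round s st) => ->.
- apply: functional_extensionality => i; rewrite /init eq_act //.
  case: ifP => // iA; apply: eq_cap.
  by move: iA; rewrite -eq_act // inE => /andP[ta_le1 _]; apply: leq_trans ta_le1 t_gt0.
Qed.

Lemma dem_round_eq I I' t p : round_eq I I' t -> dem I t p = dem I' t p.
Proof.
case=> eq_act _ eq_val; rewrite /dem.
have -> : maximizers I t p = maximizers I' t p.
  apply/setP => A; rewrite !inE eq_act; case AA: (A \subset act I' t) => //=.
  apply: eq_forallb => B; case BA: (B \subset act I' t) => //=.
  by rewrite /util !eq_val // eq_act.
by [].
Qed.

Lemma next_round_eq I I' t : round_eq I I' t -> round_eq I I' t.+1 ->
  Defs.next I t = Defs.next I' t.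
Proof.
move=> eq_t eq_t1; have [eq_act _ _] := eq_t; have [eq_act1 eq_cap1 _] := eq_t1.
apply: functional_extensionality => st; apply: functional_extensionality => p.
apply: functional_extensionality => i.
rewrite /Defs.next (dem_round_eq p eq_t) eq_act eq_act1.
case: ifP => // i_t1; case: ifP => // i_t; apply: eq_cap1.
move: i_t1 i_t; rewrite -eq_act -eq_act1 !inE => /andP[ta_t1 te_t1] /negbT.
by rewrite negb_and -!ltnNge => /orP[ta_t|]; [apply/eqP; rewrite eqn_leq ta_t1 | lia].
Qed.

Lemma init_round_eq I I' : (forall i, 0 < ta I i)%N -> round_eq I I' 1 ->
  init I = init I'.
Proof.
move=> ta_gt0 [eq_act eq_cap _]; apply: functional_extensionality => i.
rewrite /init -eq_act; case: ifP => // /[!inE] /andP[ta_le1 _]; apply: eq_cap.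
by apply/eqP; rewrite eqn_leq ta_le1 ta_gt0.
Qed.

Lemma round_eq_dynamics_agree I I' t : (forall i, 0 < ta I i)%N -> (0 < t)%N ->
  (forall s, (s <= t)%N -> round_eq I I' s) -> dynamics_agree I I' t.
Proof.
move=> ta_gt0 t_gt0 eq_round; split.
- by move=> s st; case: (eq_round s st).
- by move=> s st; apply: next_round_eq; apply: eq_round => //; apply: ltnW.
- by apply: init_round_eq => //; apply: eq_round.
Qed.

End Dynamics.

Section Chase.
Variables (R : realType) (N M T : nat).
Implicit Types (I : instance R N) (g : policy R N) (st : state N).

Definition seed := {ffun 'I_T.+1 -> 'I_M.+1}.
Implicit Types om : seed.

Definition pause om t : bool := om (inord t) == ord0.

Definition chase_price I g om t st : price R N :=
  if pause om t then fun=> 1 else block [set i | st i == 0%N] (target_price I g t).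

Definition chase_state I g t0 s0 om : nat -> state N :=
  state_at I (chase_price I g om) t0 s0.

(* Round 0 is never played; posting 1 there keeps the oracle online, since
   [init I] is only observable from round 1 on. *)
Definition chase : oracle R N seed := fun g t0 s0 om t I =>
  if t is 0 then fun=> 1 else chase_price I g om t (chase_state I g t0 s0 om t).

Lemma chaseE g t0 s0 om t I : (0 < t)%N ->
  chase g t0 s0 om t I = chase_price I g om t (chase_state I g t0 s0 om t).
Proof. by case: t. Qed.

Lemma oracle_state_chase g t0 s0 om I t : (0 < t0)%N ->
  oracle_state chase g t0 s0 om I t = chase_state I g t0 s0 om t.
Proof.
move=> t0_gt0; rewrite /oracle_state /chase_state /state_at.
elim: (t - t0)%N => [|n IH] //=.
rewrite IH /oracle_rule chaseE ?(leq_trans t0_gt0 (leq_addr _ _)) //.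
by rewrite /chase_state /state_at addKn.
Qed.

Lemma chase_state_succ I g t0 s0 om t : (t0 <= t)%N ->
  chase_state I g t0 s0 om t.+1 =
  Defs.next I t (chase_state I g t0 s0 om t)
    (chase_price I g om t (chase_state I g t0 s0 om t)).
Proof.
move=> t0t; rewrite /chase_state /state_at subSn //=.
by congr (Defs.next _ _ _ (chase_price _ _ _ _ _)); apply: subnKC.
Qed.

Lemma chase_price_agree I I' g om om' t st : dynamics_agree I I' t ->
  pause om t = pause om' t -> chase_price I g om t st = chase_price I' g om' t st.
Proof.
move=> agr eq_pause; have [eq_act _ _] := agr.
by rewrite /chase_price eq_pause /target_price eq_act // (target_state_agree g agr).
Qed.

Lemma chase_state_agree I I' g t0 s0 om om' t : dynamics_agree I I' t ->
  (forall s, (t0 <= s < t)%N -> pause om s = pause om' s) ->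
  chase_state I g t0 s0 om t = chase_state I' g t0 s0 om' t.
Proof.
elim: t => [|t IH] agr eq_pause; first by [].
have [t_lt_t0|t0_le_t] := ltnP t t0.
  by rewrite /chase_state /state_at (eqnP t_lt_t0).
have [_ eq_next _] := agr.
have agr' := dynamics_agree_le agr (leqnSn t).
have eq_pause' s : (t0 <= s < t)%N -> pause om s = pause om' s.
  by case/andP=> t0s st; rewrite eq_pause // t0s ltnW.
have eq_pause_t : pause om t = pause om' t by rewrite eq_pause // t0_le_t /=.
rewrite !chase_state_succ // eq_next // (IH agr' eq_pause').
by rewrite (chase_price_agree g _ agr' eq_pause_t).
Qed.

Lemma chase_agree I I' g t0 s0 om om' t : dynamics_agree I I' t ->
  (forall s, (t0 <= s < t)%N -> pause om s = pause om' s) ->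
  pause om t = pause om' t ->
  chase g t0 s0 om t I = chase g t0 s0 om' t I'.
Proof.
case: t => [//|t] agr eq_pause eq_pause_t.
by rewrite /chase (chase_price_agree g _ agr eq_pause_t) (chase_state_agree g s0 agr eq_pause).
Qed.

Lemma chase_online : online chase.
Proof.
move=> g t0 s0 om t I I' obs; case: (posnP t) => [->//|t_gt0].
exact: chase_agree (obs_eq_dynamics_agree t_gt0 obs) (fun _ _ => erefl) erefl.
Qed.

Lemma adaptive_chase_round_eq g t0 s0 (adv : seed -> instance R N) :
  (0 < t0)%N -> adaptive chase g t0 s0 adv -> (forall om i, 0 < ta (adv om) i)%N ->
  forall t om om', (forall s, (t0 <= s < t)%N -> pause om s = pause om' s) ->
  forall s, (s <= t)%N -> round_eq (adv om) (adv om') s.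
Proof.
move=> t0_gt0 adapt ta_gt0; elim/ltn_ind => t IH om om' eq_pause s st.
apply: adapt => r /andP[t0r rs] i _.
have rt : (r < t)%N := leq_trans rs st.
have eq_pause_r s' : (t0 <= s' < r)%N -> pause om s' = pause om' s'.
  by case/andP=> t0s' s'r; apply: eq_pause; rewrite t0s' (ltn_trans s'r rt).
have agr := round_eq_dynamics_agree (ta_gt0 om) (leq_trans t0_gt0 t0r)
  (IH r rt om om' eq_pause_r).
by rewrite (chase_agree g s0 agr eq_pause_r) // eq_pause // t0r rt.
Qed.

End Chase.

Section CoordinateIndependence.
Variables (R : numFieldType) (aT rT : finType).
Local Notation fT := {ffun aT -> rT}.

Lemma sum_ffun_coord_indep (j : aT) (c : rT) (F : fT -> R) :
  (forall f f' : fT, (forall a, a != j -> f a = f' a) -> F f = F f') ->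
  \sum_(f : fT) (f j == c)%:R * F f = #|rT|%:R^-1 * \sum_(f : fT) F f.
Proof.
move=> F_indep.
pose swap c' (f : fT) := [ffun a => if a == j then tperm c c' (f a) else f a].
have swapK c' : involutive (swap c').
  by move=> f; apply/ffunP => a; rewrite !ffunE; case: (a == j); rewrite ?tpermK.
have sum_c' c' : \sum_(f : fT) (f j == c')%:R * F f = \sum_(f : fT) (f j == c)%:R * F f.
  rewrite (reindex_inj (inv_inj (swapK c'))) /=; apply: eq_bigr => f _.
  rewrite ffunE eqxx; congr ((nat_of_bool _)%:R * _).
    by rewrite -[RHS](inj_eq (@perm_inj _ (tperm c c'))) tpermL.
  by apply: F_indep => a /negbTE aj; rewrite ffunE aj.
have -> : \sum_(f : fT) F f = \sum_(c' : rT) \sum_(f : fT) (f j == c')%:R * F f.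
  rewrite exchange_big /=; apply: eq_bigr => f _.
  rewrite (bigD1 (f j)) //= eqxx mul1r big1 ?addr0 // => c'.
  by rewrite eq_sym => /negbTE ->; rewrite mul0r.
rewrite (eq_bigr _ (fun c' _ => sum_c' c')) sumr_const -[X in _ = _ * X]mulr_natl.
by rewrite mulKf // pnatr_eq0 -lt0n; apply/card_gt0P; exists c.
Qed.

End CoordinateIndependence.

Lemma sum_le_potential_drop (f b : nat -> nat) (m n : nat) :
  (forall t, (m <= t < n)%N -> (f t.+1 + b t <= f t)%N) ->
  (\sum_(m <= t < n) b t <= f m)%N.
Proof.
move=> step; suff : (\sum_(m <= t < n) b t + f (maxn m n) <= f m)%N.
  by apply: leq_trans; apply: leq_addr.
elim: n step => [|n IH] step; first by rewrite big_geq // maxn0.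
have [mn|nm] := leqP m n; last by rewrite big_geq // (maxn_idPl nm).
rewrite big_nat_recr //= (maxn_idPr (leqW mn)) -addnA.
apply: leq_trans (IH _); last by move=> t /andP[mt tn]; apply: step; rewrite mt ltnW.
by rewrite (maxn_idPr mn) leq_add2l addnC step // mn ltnSn.
Qed.

(* [a], [b]: the target's and the chaser's stock of one resource; [d], [d']:
   whether each of them sells it in the current round. *)
Lemma gap_resource_step (a b : nat) (d d' : bool) :
  (d -> 0 < a)%N -> (d' -> 0 < b)%N ->
  ((a - d) - (b - d') + (d && (b == 0%N)) <= (a - b) + (~~ d && d'))%N.
Proof. by case: d; case: d' => /= da db; case: (eqVneq b 0%N) => /= b0; lia. Qed.

Section Round.
Variables (R : realType) (N M T C W : nat) (g : policy R N) (t0 : nat) (s0 : state N).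
Variables (I : instance R N) (om : seed M T).
Hypothesis g_feas : feasible_policy g.
Hypothesis I_valid : valid_instance C W T I.
Hypothesis t0_gt0 : (0 < t0)%N.

Local Notation target := (target_state I g).
Local Notation chase_st := (chase_state I g t0 s0 om).
Local Notation cprice t := (chase_price I g om t (chase_st t)).

Definition sold_out t := [set i | chase_state I g t0 s0 om t i == 0%N].

Definition hits t := #|dem I t (target_price I g t) :&: sold_out t|.

Definition gap t := (\sum_i (target_state I g t i - chase_state I g t0 s0 om t i))%N.

Lemma chase_price_feasible t : feasible (act I t) (chase_st t) (cprice t).
Proof.
move=> i iA; rewrite /chase_price /block.
case: (pause om t) => /=; first by rewrite ltr01 lexx.
rewrite inE; case: eqP => [->|st_neq0]; first by rewrite ltr01 lexx.
by have [] := @g_feas (act I t) (target t) i iA.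
Qed.

Section AtRound.
Variable t : nat.
Hypothesis t_range : (1 <= t <= T)%N.

Let val_set0 : Defs.val I t set0 = 0.
Proof. by case: I_valid => _ _ _ /(_ t t_range)[]. Qed.

Let val_range (A : {set 'I_N}) : A \subset act I t -> 0 <= Defs.val I t A < 1.
Proof. by move=> AA; case: I_valid => _ _ _ /(_ t t_range)[_ /(_ A AA)]. Qed.

Let target_price_gt0 : price_pos I t (target_price I g t) :=
  feasible_price_pos (@g_feas (act I t) (target t)).

Let price_ge0 p : price_pos I t p -> forall i, i \in act I t -> 0 <= p i.
Proof. by move=> p_gt0 i /p_gt0 /ltW. Qed.

Let chase_price_gt0 : price_pos I t (cprice t) :=
  feasible_price_pos (@chase_price_feasible t).

Lemma chase_loss_le :
  target_reward I g t - pay I t (cprice t) <= (pause om t || (0 < hits t)%N)%:R.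
Proof.
have pay_target_lt1 : target_reward I g t < 1 by apply: pay_lt1.
have pay_chase_ge0 : 0 <= pay I t (cprice t) by apply/pay_ge0/price_ge0.
have [_|] := boolP (pause om t || (0 < hits t)%N); first by rewrite mulr1n; lra.
rewrite negb_or -eqn0Ngt cards_eq0 => /andP[no_pause /eqP no_hit].
have dem_not_sold x : x \in dem I t (target_price I g t) -> x \notin sold_out t.
  by move=> xD; apply/negP => xZ; move/setP/(_ x): no_hit; rewrite in_setI xD xZ in_set0.
have same_price x : x \in dem I t (target_price I g t) -> cprice t x = target_price I g t x.
  by move=> /dem_not_sold xZ; rewrite /chase_price (negbTE no_pause) /block (negbTE xZ).
have same_dem : dem I t (cprice t) = dem I t (target_price I g t).
  apply: dem_raise same_price => i iA; rewrite /chase_price (negbTE no_pause) /block.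
  by case: ifP => // _; have [/andP[]] := @g_feas (act I t) (target t) i iA.
rewrite /pay same_dem (eq_bigr _ same_price) /target_reward.
by rewrite -/(target t) -/(target_price I g t) subrr.
Qed.

Lemma gap_succ_le : (t0 <= t)%N ->
  (gap t.+1 + hits t <= gap t + #|dem I t (cprice t) :\: dem I t (target_price I g t)|)%N.
Proof.
move=> t0t; have t_gt0 : (0 < t)%N by case/andP: t_range.
set D := dem I t (target_price I g t); set D' := dem I t (cprice t).
have D_gt0 i : i \in D -> (0 < target t i)%N :=
  dem_feasible_gt0 val_set0 val_range (@g_feas (act I t) (target t)).
have D'_gt0 i : i \in D' -> (0 < chase_st t i)%N :=
  dem_feasible_gt0 val_set0 val_range (@chase_price_feasible t).
have card_sum (A : {set 'I_N}) : #|A| = (\sum_i (i \in A))%N.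
  by rewrite -sum1_card big_mkcond /=; apply: eq_bigr => i _; case: (i \in A).
rewrite /gap /hits !card_sum -!big_split /=; apply: leq_sum => i _.
rewrite target_state_succ // chase_state_succ // /Defs.next.
rewrite in_setI in_setD [i \in sold_out t]inE -/D -/D'.
have step := gap_resource_step (D_gt0 i) (D'_gt0 i).
case: ifP => _; last by apply: leq_trans step; rewrite leq_add2r.
case: ifP => // iA; rewrite subnn.
suff /negbTE -> : i \notin D by [].
by apply: contraFN iA; apply: (subsetP (dem_sub _ _ _)).
Qed.

Lemma gap_step : (t0 <= t)%N -> (gap t.+1 + (pause om t && (0 < hits t)%N) <= gap t)%N.
Proof.
move=> t0t; have := gap_succ_le t0t.
have [paused|no_pause] /= := boolP (pause om t).
  suff -> : dem I t (cprice t) = set0 by rewrite set0D cards0; case: (hits t); lia.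
  apply/setP => i; rewrite in_set0; apply/negP => iD'.
  have := dem_price_lt1 val_set0 val_range (price_ge0 chase_price_gt0) iD'.
  by rewrite /chase_price paused ltxx.
case: I_valid => _ _ _ _ /(_ t t_range) [k [w [_ w_range val_k]]].
have := dem_block_gross_substitutes w_range val_k (sold_out t) target_price_gt0.
rewrite /chase_price (negbTE no_pause) -/(sold_out t) -/(hits t) /=; lia.
Qed.

End AtRound.

Lemma target_state_bounded t i : (0 < t)%N ->
  (target t i <= C)%N /\ (i \notin act I t -> target t i = 0%N).
Proof.
have [_ cap_range _ _ _] := I_valid.
elim: t => [//|t IH] _; case: (posnP t) => [->|t_gt0].
  by rewrite /target_state /state_at /= /init; case: ifP => // _; case/andP: (cap_range i).
rewrite target_state_succ // /Defs.next; case: ifP => // _; split => //.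
by case: ifP => _; [apply: leq_trans (leq_subr _ _) (IH t_gt0).1 | case/andP: (cap_range i)].
Qed.

Lemma gap_t0_le : (gap t0 <= C * W)%N.
Proof.
have [_ _ card_act _ _] := I_valid.
rewrite /gap (bigID (mem (act I t0))) /= [X in (_ + X)%N]big1 ?addn0; last first.
  by move=> i /negbTE iA; rewrite (target_state_bounded i t0_gt0).2 ?iA.
apply: leq_trans (_ : \sum_(i in act I t0) C <= _)%N.
  by apply: leq_sum => i _; apply: leq_trans (leq_subr _ _) (target_state_bounded i t0_gt0).1.
by rewrite sum_nat_const mulnC leq_mul2l card_act orbT.
Qed.

Lemma sum_pause_hits_le tf : (tf <= T)%N ->
  (\sum_(t0 <= t < tf.+1) (pause om t && (0 < hits t)%N) <= C * W)%N.
Proof.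
move=> tfT; apply: leq_trans gap_t0_le; apply: sum_le_potential_drop => t /andP[t0t ttf].
by apply: gap_step => //; rewrite (leq_trans t0_gt0 t0t) (leq_trans _ tfT).
Qed.

End Round.

Lemma ler_sqrt_nat (R : rcfType) (a b : nat) : (a * a <= b)%N ->
  (a%:R : R) <= Num.sqrt b%:R.
Proof.
move=> le_ab; rewrite -[a%:R]ger0_norm ?ler0n // -sqrtr_sqr ler_sqrt ?ler0n //.
by rewrite -natrX ler_nat -mulnn.
Qed.

Lemma sqrt_tradeoff (R : rcfType) (C W T : nat) (E : R) : (0 < C * W)%N ->
  let M := Nat.sqrt (T %/ (C * W))%N in
  E <= T%:R -> E <= T%:R / M.+1%:R + M.+1%:R * (C * W)%N%:R ->
  E <= 3%:R * Num.sqrt (C%:R * W%:R * T%:R).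
Proof.
move=> CW_gt0 M E_le_T E_le_tradeoff.
have /andP[M_le M_gt] : (M * M <= T %/ (C * W) < M.+1 * M.+1)%N.
  have [sqrt_le sqrt_gt] := Nat.sqrt_spec (T %/ (C * W))%N (Nat.le_0_l _).
  by apply/andP; split; [apply/ssrnat.leP | apply/ssrnat.ltP].
have MMCW_le_T : (M * M * (C * W) <= T)%N.
  by apply: leq_trans (leq_divM T (C * W)%N); rewrite leq_mul2r M_le orbT.
have T_lt_MMCW : (T < M.+1 * M.+1 * (C * W))%N.
  apply: leq_trans (_ : (T %/ (C * W)).+1 * (C * W) <= _)%N.
    by rewrite {1}(divn_eq T (C * W)) mulSn addnC ltn_add2r ltn_pmod.
  by rewrite leq_mul2r M_gt orbT.
rewrite -!natrM; set s := Num.sqrt _.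
have s_ge0 : 0 <= s := sqrtr_ge0 _.
rewrite (_ : 3%:R * s = s + (s + s)); last by rewrite mulr_natl mulrS mulr2n.
have [T_le_CW|CW_lt_T] := leqP T (C * W)%N.
  have : T%:R <= s.
    by rewrite /s; apply: ler_sqrt_nat; have := leq_mul T_le_CW (leqnn T); lia.
  lra.
have T_le : T%:R / M.+1%:R <= s.
  have sqrt_MM : Num.sqrt (M.+1 * M.+1)%N%:R = M.+1%:R :> R.
    by rewrite natrM -expr2 sqrtr_sqr ger0_norm ?ler0n.
  rewrite ler_pdivrMr ?ltr0n // mulrC -{1}sqrt_MM /s -sqrtrM ?ler0n // -natrM.
  by apply: ler_sqrt_nat; have := leq_mul (ltnW T_lt_MMCW) (leqnn T); lia.
have MCW_le : (M * (C * W))%N%:R <= s.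
  by rewrite /s; apply: ler_sqrt_nat; have := leq_mul MMCW_le_T (leqnn (C * W)); lia.
have CW_le : (C * W)%N%:R <= s.
  by rewrite /s; apply: ler_sqrt_nat; have := leq_mul (ltnW CW_lt_T) (leqnn (C * W)); lia.
apply: le_trans E_le_tradeoff _; rewrite -natrM mulSn natrD.
by apply: lerD => //; apply: lerD.
Qed.

Lemma valid_instance_CW_gt0 (R : realType) N C W T (I : instance R N) :
  valid_instance C W T I -> (0 < T)%N -> (0 < C * W)%N.
Proof.
case=> _ cap_range card_act _ kdem T_gt0.
have [k [w [/andP[k_gt0 k_le] _ _]]] := kdem 1%N T_gt0.
have act_gt0 : (0 < #|act I 1|)%N := leq_trans k_gt0 k_le.
have /card_gt0P[i _] := act_gt0; have /andP[cap_gt0 cap_le] := cap_range i.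
by rewrite muln_gt0 (leq_trans cap_gt0 cap_le) (leq_trans act_gt0 (card_act 1%N)).
Qed.

Lemma hits_agree (R : realType) N M T g t0 s0 (I I' : instance R N) (om om' : seed M T) t :
  dynamics_agree I I' t -> round_eq I I' t ->
  (forall s, (t0 <= s < t)%N -> pause om s = pause om' s) ->
  hits g t0 s0 I om t = hits g t0 s0 I' om' t.
Proof.
move=> agr eq_round eq_pause; have [eq_act _ _] := agr.
rewrite /hits /sold_out /target_price (target_state_agree g agr) eq_act //.
by rewrite (dem_round_eq _ eq_round) (chase_state_agree g s0 agr eq_pause).
Qed.

Lemma pause_indep M T (om om' : seed M T) t s :
  (forall k, k != inord t -> om k = om' k) -> (s < t <= T)%N -> pause om s = pause om' s.
Proof.
move=> eq_off /andP[st tT]; have sT := leq_trans (ltnW st) tT.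
rewrite /pause eq_off //; apply: contraTneq st => /(congr1 val).
by rewrite /= !inordK ?ltnS // => ->; rewrite ltnn.
Qed.

Section Expectation.
Variables (R : realType) (N M T C W : nat) (g : policy R N) (t0 : nat) (s0 : state N).
Variable adv : seed M T -> instance R N.
Hypothesis g_feas : feasible_policy g.
Hypothesis t0_range : (1 <= t0 <= T)%N.
Hypothesis adv_valid : forall om, valid_instance C W T (adv om).
Hypothesis adv_adaptive : adaptive (@chase R N M T) g t0 s0 adv.
Variable tf : nat.
Hypothesis tf_range : (t0 <= tf <= T)%N.

Let t0_gt0 : (0 < t0)%N. Proof. by case/andP: t0_range. Qed.

Let round_range t : (t0 <= t < tf.+1)%N -> (1 <= t <= T)%N.
Proof.
case/andP: tf_range => _ tfT /andP[t0t ttf].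
by rewrite (leq_trans t0_gt0 t0t) (leq_trans _ tfT).
Qed.

Definition hit om t : bool := (0 < hits g t0 s0 (adv om) om t)%N.

Definition loss om : R := \sum_(t0 <= t < tf.+1)
  (target_reward (adv om) g t - pay (adv om) t (chase g t0 s0 om t (adv om))).

Lemma loss_le_pause_hit om :
  loss om <= \sum_(t0 <= t < tf.+1) (pause om t || hit om t)%:R.
Proof.
apply: ler_sum_nat => t /round_range t_range; rewrite chaseE; last by case/andP: t_range.
exact: chase_loss_le.
Qed.

Lemma sum_pause t :
  \sum_(om : seed M T) (pause om t)%:R = #|seed M T|%:R / M.+1%:R :> R.
Proof.
rewrite (eq_bigr (fun om : seed M T => (om (inord t) == ord0)%:R * 1)); last first.
  by move=> om _; rewrite mulr1.
rewrite (@sum_ffun_coord_indep R _ _ (inord t) ord0 (fun=> 1) (fun _ _ _ => erefl)).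
by rewrite card_ord sumr_const mulrC.
Qed.

Lemma sum_hit t : (t0 <= t <= T)%N ->
  \sum_(om : seed M T) (hit om t)%:R =
  M.+1%:R * \sum_(om : seed M T) (pause om t && hit om t)%:R :> R.
Proof.
case/andP=> t0t tT.
(* By adaptivity, the coins of rounds before [t] determine whether [t] is hit. *)
have hit_indep (om om' : seed M T) : (forall k, k != inord t -> om k = om' k) ->
    (hit om t)%:R = (hit om' t)%:R :> R.
  move=> eq_off; have eq_pause s : (t0 <= s < t)%N -> pause om s = pause om' s.
    by case/andP=> _ st; apply: pause_indep eq_off _; rewrite st tT.
  have ta_gt0 om1 i : (0 < ta (adv om1) i)%N by case: (adv_valid om1) => /(_ i)[].
  have eq_round := adaptive_chase_round_eq t0_gt0 adv_adaptive ta_gt0 eq_pause.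
  have agr := round_eq_dynamics_agree (ta_gt0 om) (leq_trans t0_gt0 t0t) eq_round.
  by rewrite /hit (hits_agree g s0 agr (eq_round t (leqnn t)) eq_pause).
have -> : \sum_(om : seed M T) (pause om t && hit om t)%:R =
          \sum_(om : seed M T) (om (inord t) == ord0)%:R * (hit om t)%:R :> R.
  by apply: eq_bigr => om _; rewrite -natrM mulnb.
by rewrite (sum_ffun_coord_indep ord0 hit_indep) card_ord mulrA mulfV ?mul1r // pnatr_eq0.
Qed.

Let c : R := #|seed M T|%:R^-1.

Let c_ge0 : 0 <= c. Proof. by rewrite invr_ge0 ler0n. Qed.

Let card_c : #|seed M T|%:R * c = 1.
Proof. by rewrite mulfV // pnatr_eq0 -lt0n; apply/card_gt0P; exists [ffun=> ord0]. Qed.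

Let sum_c (x : R) : \sum_(om : seed M T) c * x = x.
Proof. by rewrite sumr_const -mulrnAl -[c *+ _]mulr_natr [c * _]mulrC card_c mul1r. Qed.

Lemma expected_loss_le_T : \sum_(om : seed M T) c * loss om <= T%:R.
Proof.
have r_le_T : (tf.+1 - t0 <= T)%N by case/andP: tf_range; lia.
apply: le_trans (_ : \sum_(om : seed M T) c * T%:R <= _); last by rewrite sum_c.
apply: ler_sum => om _; apply: ler_wpM2l => //.
apply: le_trans (loss_le_pause_hit om) (le_trans (_ : _ <= \sum_(t0 <= t < tf.+1) 1) _).
  by apply: ler_sum_nat => t _; rewrite lern1 leq_b1.
by rewrite sumr_const_nat ler_nat.
Qed.

Lemma expected_pauses_le :
  c * \sum_(t0 <= t < tf.+1) \sum_(om : seed M T) (pause om t)%:R <= T%:R / M.+1%:R.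
Proof.
have r_le_T : (tf.+1 - t0 <= T)%N by case/andP: tf_range; lia.
rewrite (eq_bigr _ (fun t _ => sum_pause t)) sumr_const_nat mulrnAr mulrA.
rewrite [c * _]mulrC card_c mul1r -mulr_natl ler_wpM2r ?ler_nat //.
by rewrite invr_ge0 ler0n.
Qed.

Lemma expected_hits_le :
  c * \sum_(t0 <= t < tf.+1) \sum_(om : seed M T) (hit om t)%:R <= M.+1%:R * (C * W)%N%:R.
Proof.
have hit_range t : (t0 <= t < tf.+1)%N -> (t0 <= t <= T)%N.
  by move=> ht; have /andP[_ ->] := round_range ht; case/andP: ht => ->.
rewrite (eq_big_nat _ _ (fun t ht => sum_hit (hit_range t ht))) -mulr_sumr exchange_big /=.
rewrite mulrCA ler_wpM2l ?ler0n //.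
rewrite mulr_sumr -[X in _ <= X]sum_c; apply: ler_sum => om _; apply: ler_wpM2l => //.
rewrite -natr_sum ler_nat.
by case/andP: tf_range => _ tfT; apply: sum_pause_hits_le.
Qed.

Lemma expected_loss_le : \sum_(om : seed M T) c * loss om <=
  T%:R / M.+1%:R + M.+1%:R * (C * W)%N%:R.
Proof.
rewrite -mulr_sumr; apply: le_trans (lerD expected_pauses_le expected_hits_le).
rewrite -mulrDr -big_split /=; apply: ler_wpM2l => //.
under [X in _ <= X]eq_bigr do rewrite -big_split /=.
rewrite [X in _ <= X]exchange_big; apply: ler_sum => om _.
apply: le_trans (loss_le_pause_hit om) _.
by apply: ler_sum_nat => t _; rewrite -natrD ler_nat; case: (pause om t); case: (hit om t).
Qed.

End Expectation.

Theorem theorem1 :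
  exists K : nat, forall (R : realType) (N C W T : nat),
  exists (Omega : finType) (w : Omega -> R) (orc : oracle R N Omega),
    [/\ (forall om, 0 <= w om), \sum_(om : Omega) w om = 1, online orc &
    forall (g : policy R N) (t0 : nat) (s0 : state N) (adv : Omega -> instance R N),
      feasible_policy g ->
      (1 <= t0 <= T)%N ->
      (forall om, valid_instance C W T (adv om)) ->
      (forall i, (s0 i <= C)%N) ->
      (forall om i, i \notin act (adv om) t0 -> s0 i = 0%N) ->
      adaptive orc g t0 s0 adv ->
      (forall om t, (t0 <= t <= T)%N ->
         feasible (act (adv om) t) (oracle_state orc g t0 s0 om (adv om) t)
                  (orc g t0 s0 om t (adv om))) /\
      (forall tf, (t0 <= tf <= T)%N ->
         \sum_(om : Omega) w om *
           (\sum_(t0 <= t < tf.+1)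
              (target_reward (adv om) g t - pay (adv om) t (orc g t0 s0 om t (adv om))))
         <= K%:R * Num.sqrt (C%:R * W%:R * T%:R))].
Proof.
exists 3%N => R N C W T.
pose M := Nat.sqrt (T %/ (C * W))%N.
have card_gt0 : (0 < #|seed M T|)%N by apply/card_gt0P; exists [ffun=> ord0].
exists (seed M T), (fun=> #|seed M T|%:R^-1), (@chase R N M T); split.
- by move=> _; rewrite invr_ge0 ler0n.
- by rewrite sumr_const -[_ *+ _]mulr_natl mulfV // pnatr_eq0 -lt0n.
- exact: chase_online.
move=> g t0 s0 adv g_feas t0_range adv_valid _ _ adapt.
have t0_gt0 : (0 < t0)%N by case/andP: t0_range.
split=> [om t /andP[t0t _]|tf tf_range].
  rewrite oracle_state_chase // chaseE ?(leq_trans t0_gt0 t0t) //.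
  exact: chase_price_feasible.
have T_gt0 : (0 < T)%N by case/andP: t0_range => /leq_trans; apply.
apply: sqrt_tradeoff (valid_instance_CW_gt0 (adv_valid [ffun=> ord0]) T_gt0) _ _.
- exact: expected_loss_le_T.
- exact: expected_loss_le.
Qed.
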